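(* Let $P_1,P_2$ be distinct points of $\mathrm{PG}(6,q)$ and let $E_1,E_2,E_3$ be planes such that $E_i\cap E_j=P_1$ and $P_2\notin\langle E_i,E_j\rangle$ for all distinct $i,j\in\{1,2,3\}$. Let $\mathcal{S}$ be the set of all solids $S$ of $\mathrm{PG}(6,q)$ with $P_2\in S$ and $S\cap E_i\neq\emptyset$ for all $i\in\{1,2,3\}$. Then $|\mathcal{S}|\le 3q^6+6q^5+7q^4+4q^3+2q^2+q+1$.
   Context: Dimensions are projective (planes 2, solids 3); $\langle\cdot\rangle$ denotes the span. *)

From HB Require Import structures.
From mathcomp Require Import all_boot all_order all_algebra.
Set Implicit Arguments. Unset Strict Implicit. Unset Printing Implicit Defensive.
Import GRing.Theory.
Local Open Scope ring_scope.

(* PG(n-1, F) is modelled by the lattice of row spaces of 'rV[F]_n.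
   A projective subspace of projective dimension d is a vector subspace of
   rank d+1.  Subspaces are represented canonically by square matrices
   S : 'M[F]_n with S = <<S>>%MS (genmx), so distinct subspaces are
   distinct matrices and the set of subspaces can be counted. *)

Definition is_subspace (F : fieldType) (n : nat) (S : 'M[F]_n) : bool :=
  S == genmx S.

Definition solids_set (F : finFieldType) (p2 : 'rV[F]_7)
    (E : 'I_3 -> 'M[F]_(3,7)) : {set 'M[F]_7} :=
  [set S : 'M[F]_7 | [&& is_subspace S, \rank S == 4%N, (p2 <= S)%MS &
       [forall i : 'I_3, (0 < \rank (S :&: E i)%MS)%N]]].

(* A solid S through P2 meeting the three planes either contains P1, and then
   contains the line P1P2, which lies in [5]_q (q^2 + 1) solids; or it meets each
   E_i in a point X_i <> P1.  In the second case either X_3 is off the plane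
   T = <X_1, X_2, P2>, so S = <T, X_3> is one of at most (q^2 + q)^3 spanned
   solids, or T is a plane through P2, off P1, meeting every E_i.  Such a plane
   is determined inside <E_1, l> :&: <E_2, l> (rank <= 4) by the line l joining
   P2 to its point on E_3, so there are at most (q^2 + q) q of them, each in
   q^3 + q^2 + q solids off P1.  All subspace counts come from double counting
   vectors or flags. *)

From HB Require Import structures.
From mathcomp Require Import all_boot all_order all_algebra.
From mathcomp Require Import ring zify.
Set Implicit Arguments. Unset Strict Implicit. Unset Printing Implicit Defensive.
Import GRing.Theory.

Definition qnum (q d : nat) : nat := \sum_(i < d) q ^ i.

Lemma subn_exp_qnum q m k : m <= k -> q ^ k - q ^ m = q ^ m * q.-1 * qnum q (k - m).
Proof.
move=> le_mk; rewrite -{1}(subnKC le_mk) expnD -{2}(muln1 (q ^ m)) -mulnBr.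
by rewrite subn1 predn_exp mulnA.
Qed.

Lemma qnumS q d : qnum q d.+1 = (q * qnum q d).+1.
Proof.
rewrite /qnum big_ord_recl expn0 add1n big_distrr; congr _.+1.
by apply: eq_bigr => i _; rewrite lift0 expnS.
Qed.

Lemma leq_qnum q d e : d <= e -> qnum q d <= qnum q e.
Proof.
move=> le_de; rewrite /qnum -!(big_mkord xpredT) (big_cat_nat (leq0n d) le_de).
exact: leq_addr.
Qed.

Lemma double_counting (A B : finType) (As : {set A}) (Bs : {set B})
    (R : A -> B -> bool) c d :
  {in Bs, forall b, #|[set a in As | R a b]| = c} ->
  {in As, forall a, #|[set b in Bs | R a b]| = d} ->
  #|Bs| * c = #|As| * d.
Proof.
have card_sum (T : finType) (S : {set T}) (P : pred T) :
    #|[set x in S | P x]| = \sum_(x in S) P x.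
  rewrite -sum1_card big_mkcond [RHS]big_mkcond; apply: eq_bigr => x _.
  by rewrite inE; case: (x \in S); case: (P x).
move=> cBs dAs; rewrite -!sum_nat_const.
transitivity (\sum_(b in Bs) \sum_(a in As) R a b).
  by apply: eq_bigr => b Bb; rewrite -card_sum cBs.
by rewrite exchange_big; apply: eq_bigr => a Aa; rewrite -card_sum dAs.
Qed.

Lemma card_bigcup_leq (I T : finType) (P : {set I}) (A : I -> {set T}) c :
  {in P, forall i, #|A i| <= c} -> #|\bigcup_(i in P) A i| <= #|P| * c.
Proof.
move=> cA; rewrite -sum_nat_const.
elim/big_rec2: _ => [|i n U Pi le_Un]; first by rewrite cards0.
by rewrite (leq_trans (leq_card_setU _ _)) // leq_add ?cA.
Qed.

Local Open Scope ring_scope.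

Section Subspaces.

Variable F : finFieldType.
Local Notation q := #|F|.

Definition subspaces_between m1 m2 n (M : 'M[F]_(m1, n)) (K : 'M[F]_(m2, n))
    (r : nat) : {set 'M[F]_n} :=
  [set X : 'M[F]_n | [&& is_subspace X, \rank X == r, (M <= X)%MS & (X <= K)%MS]].

Lemma card_rV_submx m n (A : 'M[F]_(m, n)) :
  #|[set v : 'rV[F]_n | (v <= A)%MS]| = (q ^ \rank A)%N.
Proof.
have -> : [set v : 'rV[F]_n | (v <= A)%MS] = [set x *m row_base A | x in [set: 'rV_(\rank A)]].
  apply/setP => v; rewrite inE -(eq_row_base A); apply/submxP/imsetP.
    by case=> x ->; exists x; rewrite ?inE.
  by case=> x _ ->; exists x.
rewrite card_imset; last exact: row_free_inj (row_base_free A).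
by rewrite cardsT card_mx mul1n.
Qed.

Lemma card_rV_submx_diff m1 m2 n (A : 'M[F]_(m1, n)) (B : 'M[F]_(m2, n)) :
  (B <= A)%MS ->
  #|[set v : 'rV[F]_n | (v <= A)%MS && ~~ (v <= B)%MS]| = (q ^ \rank A - q ^ \rank B)%N.
Proof.
move=> sBA; rewrite -!card_rV_submx -cardsDS.
  by apply: eq_card => v; rewrite !inE andbC.
by apply/subsetP => v; rewrite !inE => /submx_trans->.
Qed.

Lemma mxrank_adds_rank1 m1 m2 n (A : 'M[F]_(m1, n)) (B : 'M[F]_(m2, n)) :
  \rank B = 1%N -> ~~ (B <= A)%MS -> \rank (A + B)%MS = (\rank A).+1.
Proof.
move=> rB nBA; have /leqifP := mxrank_leqif_sup (capmxSr A B).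
rewrite sub_capmx submx_refl andbT (negbTE nBA) rB ltnS leqn0 => /eqP rAB.
by have := mxrank_sum_cap A B; rewrite rAB rB addn0 addn1.
Qed.

Lemma genmx_subspace m n (A : 'M[F]_(m, n)) (X : 'M[F]_n) :
  is_subspace X -> (A <= X)%MS -> (\rank X <= \rank A)%N -> <<A>>%MS = X.
Proof.
move=> /eqP defX sAX rXA; rewrite defX; apply/eq_genmx/eqmxP.
by rewrite -(geq_leqif (mxrank_leqif_eq sAX)).
Qed.

Lemma genmx_adds_between_succ m1 m2 n (M : 'M[F]_(m1, n)) (K : 'M[F]_(m2, n)) (v : 'rV[F]_n) :
  (M <= K)%MS -> (v <= K)%MS -> ~~ (v <= M)%MS ->
  <<(M + v)%MS>>%MS \in subspaces_between M K (\rank M).+1.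
Proof.
move=> sMK vK vM; have v_neq0 : v != 0 by apply: contraNneq vM => ->; apply: sub0mx.
rewrite inE /is_subspace genmx_id eqxx !genmxE addsmxSl addsmx_sub sMK vK.
by rewrite mxrank_adds_rank1 ?rank_rV ?v_neq0 ?eqxx.
Qed.

Lemma between_succ_genmx m1 m2 n (M : 'M[F]_(m1, n)) (K : 'M[F]_(m2, n))
    (v : 'rV[F]_n) (X : 'M[F]_n) :
  X \in subspaces_between M K (\rank M).+1 -> ~~ (v <= M)%MS -> (v <= X)%MS ->
  X = <<(M + v)%MS>>%MS.
Proof.
rewrite inE => /and4P[sX /eqP rX sMX _] vM vX; symmetry; apply: genmx_subspace => //.
  by rewrite addsmx_sub sMX.
have v_neq0 : v != 0 by apply: contraNneq vM => ->; apply: sub0mx.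
by rewrite rX mxrank_adds_rank1 ?rank_rV ?v_neq0.
Qed.

Lemma card_between_succ m1 m2 n (M : 'M[F]_(m1, n)) (K : 'M[F]_(m2, n)) :
  (M <= K)%MS ->
  #|subspaces_between M K (\rank M).+1| = qnum q (\rank K - \rank M).
Proof.
move=> sMK; set C := subspaces_between _ _ _.
have cardCV : (#|C| * (q ^ (\rank M).+1 - q ^ \rank M) = q ^ \rank K - q ^ \rank M)%N.
  rewrite -card_rV_submx_diff // -[RHS]muln1.
  apply: (double_counting (R := fun v X => (v <= X)%MS)).
    move=> X; rewrite inE => /and4P[_ /eqP rX sMX sXK]; rewrite -rX -card_rV_submx_diff //.
    apply: eq_card => v; rewrite !inE.
    by case vX: (v <= X)%MS; rewrite ?andbT ?andbF //= (submx_trans vX sXK).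
  move=> v; rewrite inE => /andP[vK vM].
  have -> : [set X in C | (v <= X)%MS] = [set <<(M + v)%MS>>%MS]; last exact: cards1.
  apply/setP => X; rewrite in_set1 inE.
  apply/andP/eqP => [[CX vX] | ->]; first exact: (between_succ_genmx CX vM vX).
  by rewrite genmx_adds_between_succ // genmxE addsmxSr.
have q_gt1 : (1 < q)%N := card_finNzRing_gt1 F.
have qnum1 : qnum q 1 = 1%N by rewrite /qnum big_ord1.
have unit_pos : (0 < q ^ \rank M * q.-1)%N by rewrite muln_gt0 expn_gt0 -subn1 !subn_gt0 ltnW.
move: cardCV; rewrite !subn_exp_qnum ?mxrankS // subSnn qnum1 muln1 mulnC.
by move/eqP; rewrite eqn_pmul2l // => /eqP.
Qed.

Lemma card_between_succ_notin m1 m2 n (M : 'M[F]_(m1, n)) (K : 'M[F]_(m2, n)) (v : 'rV[F]_n) :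
  (M <= K)%MS -> (v <= K)%MS -> ~~ (v <= M)%MS ->
  #|[set X in subspaces_between M K (\rank M).+1 | ~~ (v <= X)%MS]| =
    (qnum q (\rank K - \rank M)).-1.
Proof.
move=> sMK vK vM; have Mv_cover := genmx_adds_between_succ sMK vK vM.
rewrite -card_between_succ // (cardsD1 <<(M + v)%MS>>%MS (subspaces_between M K _)).
rewrite Mv_cover add1n /=; apply: eq_card => X.
rewrite in_setD1 in_set [RHS]andbC; case CX: (X \in subspaces_between M K _) => //=.
congr (~~ _); apply/idP/eqP => [vX | ->]; last by rewrite genmxE addsmxSr.
exact: between_succ_genmx CX vM vX.
Qed.

Lemma card_between_succ_succ m1 m2 n (M : 'M[F]_(m1, n)) (K : 'M[F]_(m2, n)) :
  (M <= K)%MS ->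
  (#|subspaces_between M K (\rank M).+2| * qnum q 2 =
     qnum q (\rank K - \rank M) * qnum q (\rank K - \rank M).-1)%N.
Proof.
move=> sMK; rewrite -card_between_succ // -subnS.
apply: (double_counting (R := fun Y X => (Y <= X)%MS)).
  move=> X; rewrite inE => /and4P[_ /eqP rX sMX sXK].
  have -> : 2%N = (\rank X - \rank M)%N by rewrite rX; lia.
  rewrite -card_between_succ //; apply: eq_card => Y.
  rewrite !inE -!andbA; apply: andb_id2l => _; apply: andb_id2l => _; apply: andb_id2l => _.
  by apply/andP/idP => [[] | YX] //; rewrite (submx_trans YX sXK).
move=> Y; rewrite inE => /and4P[_ /eqP rY sMY sYK].
rewrite -rY -card_between_succ //; apply: eq_card => X.
rewrite !inE -!andbA rY; apply: andb_id2l => _; apply: andb_id2l => _.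
by apply/and3P/andP => [[_ -> ->] | [YX ->]] //; rewrite (submx_trans sMY YX).
Qed.

End Subspaces.

Lemma ord3P (i : 'I_3) : [\/ i = 0, i = 1 | i = 2].
Proof.
by case: i => [[|[|[|//]]] ?]; [apply: Or31 | apply: Or32 | apply: Or33]; apply: val_inj.
Qed.

Section Configuration.

Variables (F : finFieldType) (p1 p2 : 'rV[F]_7) (E : 'I_3 -> 'M[F]_(3, 7)).
Hypotheses (hp1 : p1 != 0) (hp2 : p2 != 0) (hp12 : ~~ (p1 == p2)%MS)
  (hE : forall i, \rank (E i) = 3%N)
  (hEE : forall i j, i != j -> (E i :&: E j == p1)%MS)
  (hP2 : forall i j, i != j -> ~~ (p2 <= E i + E j)%MS).
Local Notation q := #|F|.

Lemma p1_sub_E i : (p1 <= E i)%MS.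
Proof.
have [j ij] : exists j, i != j by case/ord3P: (i) => ->; [exists 1 | exists 0 | exists 0].
by case/andP: (hEE ij) => _ /submx_trans; apply; apply: capmxSl.
Qed.

Lemma sub_EE_p1 i j m (A : 'M[F]_(m, 7)) :
  i != j -> (A <= E i)%MS -> (A <= E j)%MS -> (A <= p1)%MS.
Proof. by move=> ij Ai Aj; case/andP: (hEE ij) => /(submx_trans _)-> //; rewrite sub_capmx Ai. Qed.

Lemma mxrank_p1 : \rank p1 = 1%N.
Proof. by rewrite rank_rV hp1. Qed.

Lemma mxrank_EE i j : i != j -> \rank (E i + E j)%MS = 5%N.
Proof.
move=> ij; have := mxrank_sum_cap (E i) (E j).
by rewrite (eqmx_rank (hEE ij)) mxrank_p1 !hE addn1 => -[].
Qed.

Definition points_off_p1 i : {set 'M[F]_7} :=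
  [set X in subspaces_between (0 : 'M[F]_7) (E i) 1 | ~~ (p1 <= X)%MS].

Lemma card_points_off_p1 i : #|points_off_p1 i| = (q ^ 2 + q)%N.
Proof.
have := card_between_succ_notin (sub0mx 7 (E i)) (p1_sub_E i).
rewrite mxrank0 hE subn0 submx0 hp1 => /(_ isT) ->.
by rewrite qnumS /qnum !big_ord_recr big_ord0 /=; ring.
Qed.

Lemma mxrank_p2 : \rank p2 = 1%N.
Proof. by rewrite rank_rV hp2. Qed.

Lemma p2_notin_E i : ~~ (p2 <= E i)%MS.
Proof.
have [j ij] : exists j, i != j by case/ord3P: (i) => ->; [exists 1 | exists 0 | exists 0].
by apply: contra (hP2 ij) => /submx_trans->; rewrite ?addsmxSl.
Qed.

Lemma points_off_p1P i X :
  X \in points_off_p1 i -> [/\ \rank X = 1%N, (X <= E i)%MS & ~~ (p1 <= X)%MS].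
Proof. by rewrite !inE => /andP[/and4P[_ /eqP rX _ XE] p1X]. Qed.

Lemma point_off_p1_notin_E i j X :
  i != j -> X \in points_off_p1 i -> ~~ (X <= E j)%MS.
Proof.
move=> ij /points_off_p1P[rX XEi p1X]; apply: contra p1X => XEj.
have Xp1 := sub_EE_p1 ij XEi XEj.
by rewrite -(geq_leqif (mxrank_leqif_sup Xp1)) rX mxrank_p1.
Qed.

Lemma exists_point_off_p1 m (A : 'M[F]_(m, 7)) i :
  ~~ (p1 <= A)%MS -> (0 < \rank (A :&: E i))%N ->
  exists2 X, X \in points_off_p1 i & (X <= A)%MS.
Proof.
move=> p1A; rewrite lt0n mxrank_eq0 => /rowV0Pn[v vAE v_neq0].
have vA := submx_trans vAE (capmxSl _ _); have vE := submx_trans vAE (capmxSr _ _).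
exists <<v>>%MS; last by rewrite genmxE.
rewrite !inE /is_subspace genmx_id eqxx !genmxE rank_rV v_neq0 sub0mx vE /=.
by apply: contra p1A => /submx_trans->.
Qed.

Lemma mxrank_point_p2 i X : X \in points_off_p1 i -> \rank (X + p2)%MS = 2%N.
Proof.
case/points_off_p1P => rX XE _; rewrite mxrank_adds_rank1 ?rX ?mxrank_p2 //.
by apply: contra (p2_notin_E i) => /submx_trans->.
Qed.

Lemma mxrank_cap_E_point_p2 i j X :
  i != j -> X \in points_off_p1 i -> \rank (E j :&: (X + p2))%MS = 0%N.
Proof.
move=> ij PX; have [rX XE _] := points_off_p1P PX.
have := mxrank_sum_cap (E j) (X + p2)%MS.
rewrite (mxrank_point_p2 PX) addsmxA (mxrank_adds_rank1 mxrank_p2).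
  rewrite mxrank_adds_rank1 ?hE ?rX ?(point_off_p1_notin_E ij PX) //.
  by move/(congr1 (subn^~ 5%N)); rewrite addKn => ->.
have ji : j != i by rewrite eq_sym.
by apply: contra (hP2 ji) => /submx_trans->; rewrite ?addsmxS.
Qed.

Definition planes_through_p2 : {set 'M[F]_7} :=
  [set T in subspaces_between p2 1%:M 3 |
     ~~ (p1 <= T)%MS && [forall i, (0 < \rank (T :&: E i))%N]].

(* For the line l through X and P2, every plane through l meeting E 0 and E 1
   lies in <E 0, l> :&: <E 1, l>, a space of rank at most 4. *)
Definition joins_cap (X : 'M[F]_7) : 'M[F]_7 :=
  ((E 0 + (X + p2)) :&: (E 1 + (X + p2)))%MS.

Lemma plane_sub_join_E T X j : 2 != j ->
  T \in planes_through_p2 -> X \in points_off_p1 2 -> (X <= T)%MS ->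
  (T <= E j + (X + p2))%MS.
Proof.
move=> j2 + PX XT; rewrite !inE => /andP[/and4P[_ /eqP rT p2T _] /andP[p1T /forallP meetT]].
have [Y PY YT] := exists_point_off_p1 p1T (meetT j).
have [rY YE _] := points_off_p1P PY.
have LT : (X + p2 <= T)%MS by rewrite addsmx_sub XT.
have YL : ~~ (Y <= X + p2)%MS.
  apply/negP => YL.
  have : (\rank Y <= \rank (E j :&: (X + p2)))%N by rewrite mxrankS // sub_capmx YE.
  by rewrite rY (mxrank_cap_E_point_p2 j2 PX).
have LYT : (X + p2 + Y <= T)%MS by rewrite addsmx_sub LT.
have TLY : (T <= X + p2 + Y)%MS.
  by rewrite -(geq_leqif (mxrank_leqif_sup LYT)) rT mxrank_adds_rank1 // (mxrank_point_p2 PX).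
apply: submx_trans TLY _; rewrite addsmx_sub addsmxSr.
exact: submx_trans YE (addsmxSl _ _).
Qed.

Lemma mxrank_joins_cap X : X \in points_off_p1 2 -> (\rank (joins_cap X) <= 4)%N.
Proof.
move=> PX; have := mxrank_sum_cap (E 0 + (X + p2))%MS (E 1 + (X + p2))%MS.
have rEL j : 2 != j -> \rank (E j + (X + p2))%MS = 5%N.
  move=> j2; have := mxrank_sum_cap (E j) (X + p2)%MS.
  by rewrite (mxrank_cap_E_point_p2 j2 PX) (mxrank_point_p2 PX) hE addn0.
have EEp2 : (E 0 + E 1 + p2 <= (E 0 + (X + p2)) + (E 1 + (X + p2)))%MS.
  by rewrite -addsmxA; apply: addsmxS (addsmxSl _ _) (addsmxS (submx_refl _) (addsmxSr _ _)).
have := mxrankS EEp2; rewrite mxrank_adds_rank1 ?mxrank_p2 ?hP2 // mxrank_EE //.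
rewrite !rEL // /joins_cap => gt5 sum10.
by rewrite -(leq_add2l 6) -[(6 + 4)%N]/(5 + 5)%N -sum10 leq_add2r.
Qed.

Lemma card_planes_over_point X : X \in points_off_p1 2 ->
  (#|[set T in subspaces_between (X + p2)%MS (joins_cap X) 3 | ~~ (p1 <= T)%MS]| <= q)%N.
Proof.
move=> PX; have LK : (X + p2 <= joins_cap X)%MS by rewrite sub_capmx !addsmxSr.
have p1K : (p1 <= joins_cap X)%MS.
  by rewrite sub_capmx !(submx_trans (p1_sub_E _) (addsmxSl _ _)).
have p1L : ~~ (p1 <= X + p2)%MS.
  apply/negP => p1L.
  have p1EL : (p1 <= E 0 :&: (X + p2))%MS by rewrite sub_capmx p1_sub_E.
  by have := mxrankS p1EL; rewrite mxrank_p1 (mxrank_cap_E_point_p2 _ PX).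
have := card_between_succ_notin LK p1K p1L; rewrite (mxrank_point_p2 PX) => ->.
apply: (@leq_trans (qnum q 2).-1); last by rewrite /qnum !big_ord_recr big_ord0.
by rewrite -!subn1 leq_sub2r // leq_qnum // leq_subLR mxrank_joins_cap.
Qed.

Lemma card_planes_through_p2 : (#|planes_through_p2| <= (q ^ 2 + q) * q)%N.
Proof.
rewrite -(card_points_off_p1 2).
apply: leq_trans (subset_leq_card _) (card_bigcup_leq card_planes_over_point).
apply/subsetP => T PT; have := PT.
rewrite !inE => /andP[/and4P[sT /eqP rT p2T _] /andP[p1T /forallP meetT]].
have [X PX XT] := exists_point_off_p1 p1T (meetT 2).
apply/bigcupP; exists X => //; rewrite !inE sT rT p1T addsmx_sub XT p2T.
by rewrite sub_capmx !(plane_sub_join_E _ PT PX XT).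
Qed.

Definition solids_over_planes : {set 'M[F]_7} :=
  \bigcup_(T in planes_through_p2) [set S in subspaces_between T 1%:M 4 | ~~ (p1 <= S)%MS].

Lemma card_solids_over_planes :
  (#|solids_over_planes| <= (q ^ 2 + q) * q * (q ^ 3 + q ^ 2 + q))%N.
Proof.
apply: leq_trans (card_bigcup_leq (c := (q ^ 3 + q ^ 2 + q)%N) _) _; last first.
  by rewrite leq_mul2r card_planes_through_p2 orbT.
move=> T; rewrite !inE => /andP[/and4P[_ /eqP rT _ _] /andP[p1T _]].
have := card_between_succ_notin (submx1 T) (submx1 p1) p1T; rewrite rT mxrank1 => ->.
by rewrite qnumS /qnum !big_ord_recr big_ord0 /=; apply: eq_leq; ring.
Qed.

Definition spanned_solids : {set 'M[F]_7} :=
  [set <<(X.1.1 + X.1.2 + p2 + X.2)%MS>>%MS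
     | X in setX (setX (points_off_p1 0) (points_off_p1 1)) (points_off_p1 2)].

Lemma card_spanned_solids : (#|spanned_solids| <= (q ^ 2 + q) ^ 3)%N.
Proof.
apply: leq_trans (leq_imset_card _ _) _.
by rewrite !cardsX !card_points_off_p1; apply: eq_leq; ring.
Qed.

Lemma card_solids_through_p1 :
  (#|[set S in solids_set p2 E | (p1 <= S)%MS]| <= qnum q 5 * (q ^ 2 + 1))%N.
Proof.
have p2p1 : ~~ (p2 <= p1)%MS.
  apply: contra hp12 => p2p1; rewrite /eqmx p2p1 andbT.
  by rewrite -(geq_leqif (mxrank_leqif_sup p2p1)) mxrank_p1 mxrank_p2.
have rL : \rank (p1 + p2)%MS = 2%N by rewrite mxrank_adds_rank1 ?mxrank_p1 ?mxrank_p2.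
have := card_between_succ_succ (submx1 (p1 + p2)%MS); rewrite rL mxrank1.
have -> : qnum q (7 - 2).-1 = (qnum q 2 * (q ^ 2 + 1))%N.
  by rewrite /qnum !big_ord_recr big_ord0 /=; ring.
rewrite mulnCA mulnC => /eqP; rewrite eqn_pmul2l ?/qnum ?big_ord_recr ?big_ord0 // => /eqP <-.
apply: subset_leq_card; apply/subsetP => S; rewrite !inE.
by case/andP=> /and4P[-> -> p2S _] p1S; rewrite addsmx_sub p1S p2S submx1.
Qed.

Lemma solid_off_p1_cases S : S \in solids_set p2 E -> ~~ (p1 <= S)%MS ->
  S \in spanned_solids :|: solids_over_planes.
Proof.
rewrite inE => /and4P[sS /eqP rS p2S /forallP meetS] p1S.
have [X0 P0 X0S] := exists_point_off_p1 p1S (meetS 0).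
have [X1 P1 X1S] := exists_point_off_p1 p1S (meetS 1).
have [X2 P2 X2S] := exists_point_off_p1 p1S (meetS 2).
have [rX0 X0E _] := points_off_p1P P0.
have [rX1 X1E _] := points_off_p1P P1.
have [rX2 X2E _] := points_off_p1P P2.
set T := (X0 + X1 + p2)%MS.
have rT : \rank T = 3%N.
  have X01E : (X0 + X1 <= E 0 + E 1)%MS by apply: addsmxS.
  rewrite mxrank_adds_rank1 ?mxrank_p2 ?mxrank_adds_rank1 ?rX0 //.
    by apply: contra (point_off_p1_notin_E (isT : 1 != 0 :> 'I_3) P1) => /submx_trans->.
  by apply: contra (hP2 (isT : 0 != 1 :> 'I_3)) => /submx_trans->.
have TS : (T <= S)%MS by rewrite !addsmx_sub X0S X1S p2S.
rewrite inE; case X2T : (X2 <= T)%MS; [apply/orP; right | apply/orP; left].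
  apply/bigcupP; exists <<T>>%MS; last by rewrite !inE sS rS genmxE TS submx1 p1S.
  rewrite !inE /is_subspace genmx_id !genmxE rT addsmxSr submx1 eqxx /=.
  rewrite (contra (fun p1T => submx_trans p1T TS) p1S) /=.
  have meet j (X : 'M[F]_7) : (X <= T)%MS -> (X <= E j)%MS -> \rank X = 1%N ->
      (0 < \rank (<<T>> :&: E j))%N.
    move=> XT XE rX; apply: leq_trans (mxrankS (_ : X <= <<T>> :&: E j)%MS).
      by rewrite rX.
    by rewrite sub_capmx genmxE XT.
  apply/forallP => i; case/ord3P: (i) => ->;
    [apply: (meet _ X0) | apply: (meet _ X1) | apply: (meet _ X2)] => //.
    by rewrite /T -addsmxA addsmxSl.
  by rewrite /T -addsmxA addsmxC -addsmxA addsmxSl.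
apply/imsetP; exists ((X0, X1), X2); first by rewrite !in_setX P0 P1 P2.
apply/esym/genmx_subspace => //; first by rewrite addsmx_sub TS.
by rewrite rS mxrank_adds_rank1 ?rT ?X2T.
Qed.

End Configuration.

Theorem lemma4p2 (F : finFieldType) (q : nat) (hq : #|F| = q)
  (p1 p2 : 'rV[F]_7) (E : 'I_3 -> 'M[F]_(3,7))
  (hp1 : p1 != 0) (hp2 : p2 != 0) (hp12 : ~~ (p1 == p2)%MS)
  (hE : forall i, \rank (E i) = 3%N)
  (hEE : forall i j, i != j -> (E i :&: E j == p1)%MS)
  (hP2 : forall i j, i != j -> ~~ (p2 <= E i + E j)%MS) :
  (#|solids_set p2 E| <=
     3 * q ^ 6 + 6 * q ^ 5 + 7 * q ^ 4 + 4 * q ^ 3 + 2 * q ^ 2 + q + 1)%N.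
Proof.
have cover : solids_set p2 E \subset [set S in solids_set p2 E | (p1 <= S)%MS]
    :|: (spanned_solids p1 p2 E :|: solids_over_planes p1 p2 E).
  apply/subsetP => S sS; rewrite in_setU inE sS /=.
  by case: (boolP (p1 <= S)%MS) => //= p1S; apply: solid_off_p1_cases.
apply: leq_trans (subset_leq_card cover) _.
apply: leq_trans (leq_card_setU _ _) _.
apply: leq_trans (leq_add (leqnn _) (leq_card_setU _ _)) _.
apply: leq_trans (leq_add (card_solids_through_p1 E hp1 hp2 hp12)
  (leq_add (card_spanned_solids p2 hp1 hE hEE)
           (card_solids_over_planes hp1 hp2 hE hEE hP2))) _.
by rewrite hq /qnum !big_ord_recr big_ord0 /=; apply: eq_leq; ring.
Qed.
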